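(* Let $(W,\mathrm d)$ and $(W_h,\mathrm d_h)$ be Hilbert complexes, with morphisms $i_h\colon W_h\to W$ and $\pi_h\colon W\to W_h$ such that $\pi_h^k\circ i_h^k=\mathrm{id}_{W_h^k}$ for each $k$. Suppose that for all $k$, \[\|q-i_h^k\pi_h^kq\|<\|q\|\quad\text{for all } q\in\mathfrak H^k,\ q\neq 0.\] Then the map induced by $\pi_h$ on reduced cohomology, $[z]\mapsto[\pi_hz]$, is an isomorphism $\mathfrak Z^k/\overline{\mathfrak B^k}\to\mathfrak Z_h^k/\overline{\mathfrak B_h^k}$ for each $k$ (and hence so is the map induced by $i_h$, its inverse).
   Context: A Hilbert complex $(W,\mathrm d)$ is a sequence of Hilbert spaces $W^k$ together with closed, densely defined (possibly unbounded) linear maps $\mathrm d^k\colon V^k\subset W^k\to V^{k+1}\subset W^{k+1}$ satisfying $\mathrm d^k\circ\mathrm d^{k-1}=0$. A morphism $f\colon(W,\mathrm d)\to(W',\mathrm d')$ is a sequence of bounded linear maps $f^k\colon W^k\to W'^k$ with $f^kV^k\subset V'^k$ and $\mathrm d'^kf^k=f^{k+1}\mathrm d^k$ on $V^k$. For $(W,\mathrm d)$: $\mathfrak Z^k=\ker\mathrm d^k$, $\mathfrak B^k=\mathrm d^{k-1}V^{k-1}$, the harmonic space is $\mathfrak H^k=\mathfrak Z^k\cap(\mathfrak B^k)^{\perp}$ (orthogonal complement in $W^k$), and the reduced cohomology space is $\mathfrak Z^k/\overline{\mathfrak B^k}$; similarly $\mathfrak Z_h^k,\mathfrak B_h^k$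 for $(W_h,\mathrm d_h)$. Norms $\|\cdot\|$ are those of $W^k$. *)

From HB Require Import structures.
From mathcomp Require Import all_boot all_order all_algebra.
From mathcomp Require Import all_classical all_reals all_analysis.
Unset Strict Implicit. Unset Printing Implicit Defensive.
Import Order.TTheory GRing.Theory Num.Theory.
Import numFieldNormedType.Exports.
Local Open Scope classical_set_scope.
Local Open Scope ring_scope.

(* ip is an inner product on V inducing the norm of V:
   symmetric, linear in the first argument, and |x| = sqrt <x,x>
   (positive definiteness follows from the norm axioms). *)
Definition inner_product (R : realType) (V : normedModType R)
    (ip : V -> V -> R) : Prop :=
  (forall x y, ip x y = ip y x) /\
  (forall (a : R) x y z, ip (a *: x + y) z = a * ip x z + ip y z) /\
  (forall x, `|x| = Num.sqrt (ip x x)).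

(* W k is a (real) Hilbert space
   (complete normed space whose norm comes from the inner product ip k);
   d k is an unbounded linear operator with domain V k ⊂ W k, modelled as
   a total function whose values off V k are irrelevant. *)
Record hilbert_complex (R : realType) := HilbertComplex {
  hc_space : nat -> completeNormedModType R;
  hc_ip : forall k, hc_space k -> hc_space k -> R;
  hc_ipP : forall k, @inner_product R (hc_space k) (hc_ip k);
  hc_dom : forall k, set (hc_space k);
  hc_d : forall k, hc_space k -> hc_space k.+1;
  hc_dom0 : forall k, hc_dom k 0;
  hc_domL : forall k (a : R) x y, hc_dom k x -> hc_dom k y ->
      hc_dom k (a *: x + y);
  hc_dlin : forall k (a : R) x y, hc_dom k x -> hc_dom k y ->
      hc_d k (a *: x + y) = a *: hc_d k x + hc_d k y;
  hc_dense : forall k, closure (hc_dom k) = setT;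
  hc_closed : forall k,
      closed [set p : hc_space k * hc_space k.+1 | hc_dom k p.1 /\ hc_d k p.1 = p.2];
  hc_dmap : forall k x, hc_dom k x -> hc_dom k.+1 (hc_d k x);
  hc_dd : forall k x, hc_dom k x -> hc_d k.+1 (hc_d k x) = 0
}.
Arguments hc_space {R} h k.
Arguments hc_ip {R} h k.
Arguments hc_dom {R} h k.
Arguments hc_d {R} h k.

Section HC.
Variable R : realType.

Definition hc_morphism (C C' : hilbert_complex R)
    (f : forall k, hc_space C k -> hc_space C' k) : Prop :=
  forall k,
    (forall (a : R) x y, f k (a *: x + y) = a *: f k x + f k y) /\
    continuous (f k) /\
    (forall x, hc_dom C k x -> hc_dom C' k (f k x)) /\
    (forall x, hc_dom C k x -> hc_d C' k (f k x) = f k.+1 (hc_d C k x)).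

Definition hc_cocycles (C : hilbert_complex R) k : set (hc_space C k) :=
  [set x | hc_dom C k x /\ hc_d C k x = 0].

Definition hc_coboundaries (C : hilbert_complex R) k : set (hc_space C k) :=
  match k return set (hc_space C k) with
  | 0 => [set 0]
  | k'.+1 => hc_d C k' @` hc_dom C k'
  end.

Definition hc_harmonic (C : hilbert_complex R) k : set (hc_space C k) :=
  [set q | hc_cocycles C k q /\
           forall b, hc_coboundaries C k b -> hc_ip C k q b = 0].

(* Reduced cohomology Z^k / closure(B^k): z1 and z2 in Z^k represent the
   same class iff z1 - z2 ∈ closure(B^k).  The map [z] ↦ [f z] induced by
   f : W^k -> W'^k is
   - well defined: f Z^k ⊂ Z'^k and f (closure B^k) ⊂ closure B'^k,
   - injective: f z ∈ closure B'^k implies z ∈ closure B^k (z ∈ Z^k),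
   - surjective: every class of Z'^k contains some f z, z ∈ Z^k.
   (It is linear automatically since f is.) *)
Definition induces_reduced_cohomology_iso (C C' : hilbert_complex R) k
    (f : hc_space C k -> hc_space C' k) : Prop :=
  (forall z, hc_cocycles C k z -> hc_cocycles C' k (f z)) /\
  (forall b, closure (hc_coboundaries C k) b -> closure (hc_coboundaries C' k) (f b)) /\
  (forall z, hc_cocycles C k z -> closure (hc_coboundaries C' k) (f z) ->
             closure (hc_coboundaries C k) z) /\
  (forall z', hc_cocycles C' k z' ->
     exists2 z, hc_cocycles C k z & closure (hc_coboundaries C' k) (z' - f z)).

End HC.

(* Project a cocycle [z] onto the closure of the coboundaries: [z = b + q]
   with [b] a limit of coboundaries and [q] orthogonal to all coboundaries,
   so [q] is harmonic.  If [pih z] is a limit of discrete coboundaries, then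
   so is [pih q], hence [ih (pih q)] is a limit of coboundaries, and the
   orthogonality of [q] gives [|q| <= |q - ih (pih q)|]; the gap hypothesis
   then forces [q = 0], i.e. [z] is a limit of coboundaries.  This is the
   injectivity of the map induced by [pih]; surjectivity comes from
   [pih \o ih = id], and [ih (pih z) - z] is a cocycle killed by [pih]. *)

From HB Require Import structures.
From mathcomp Require Import all_boot all_order all_algebra.
From mathcomp Require Import all_classical all_reals all_analysis.
From mathcomp Require Import ring lra.
Import Order.TTheory GRing.Theory Num.Theory.
Import numFieldNormedType.Exports.
Local Open Scope classical_set_scope.
Local Open Scope ring_scope.
Set Implicit Arguments.

Section InnerProduct.
Variables (R : realType) (V : normedModType R) (ip : V -> V -> R).
Hypothesis ipP : @inner_product R V ip.

Lemma ipC x y : ip x y = ip y x. Proof. by case: ipP. Qed.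

Lemma ipZlD a x y z : ip (a *: x + y) z = a * ip x z + ip y z.
Proof. by case: ipP => _ []. Qed.

Lemma ip0l z : ip 0 z = 0.
Proof. by have := ipZlD 1 0 0 z; rewrite scaler0 addr0 mul1r; lra. Qed.

Lemma ipZl a x z : ip (a *: x) z = a * ip x z.
Proof. by rewrite -[a *: x]addr0 ipZlD ip0l addr0. Qed.

Lemma ipDl x y z : ip (x + y) z = ip x z + ip y z.
Proof. by rewrite -[x]scale1r ipZlD mul1r scale1r. Qed.

Lemma ipBl x y z : ip (x - y) z = ip x z - ip y z.
Proof. by rewrite -scaleN1r addrC ipZlD mulN1r addrC. Qed.

Lemma ipZr a x z : ip z (a *: x) = a * ip z x.
Proof. by rewrite ipC ipZl ipC. Qed.

Lemma ipDr x y z : ip z (x + y) = ip z x + ip z y.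
Proof. by rewrite ipC ipDl !(ipC z). Qed.

Lemma ipBr x y z : ip z (x - y) = ip z x - ip z y.
Proof. by rewrite ipC ipBl !(ipC z). Qed.

Lemma ip_ge0 x : 0 <= ip x x.
Proof.
rewrite leNgt; apply/negP => ip_lt0.
have : `|x| = 0 by case: ipP => _ [_ ->]; apply/eqP; rewrite sqrtr_eq0 ltW.
by move/normr0_eq0 => x0; move: ip_lt0; rewrite x0 ip0l ltxx.
Qed.

Lemma sqr_normE x : `|x| ^+ 2 = ip x x.
Proof. by case: ipP => _ [_ ->]; rewrite sqr_sqrtr // ip_ge0. Qed.

Lemma sqr_normB x y : `|x - y| ^+ 2 = `|x| ^+ 2 - 2 * ip x y + `|y| ^+ 2.
Proof. by rewrite !sqr_normE ipBl !ipBr (ipC y x); ring. Qed.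

Lemma parallelogram (x y : V) :
  `|x + y| ^+ 2 + `|x - y| ^+ 2 = 2 * (`|x| ^+ 2 + `|y| ^+ 2).
Proof. by rewrite !sqr_normE ipDl ipBl !ipBr !ipDr (ipC y x); ring. Qed.

(* Expanding [|q - t s|^2 >= |q|^2] gives [2 t <q,s> <= t^2 |s|^2] for all [t];
   taking [t] proportional to [<q,s>] forces [<q,s> = 0]. *)
Lemma ip_eq0_of_minimal q s :
  (forall t : R, `|q| <= `|q - t *: s|) -> ip q s = 0.
Proof.
move=> qmin; set c := ip q s.
pose t := c / (`|s| ^+ 2 + 1).
have s2_gt0 : 0 < `|s| ^+ 2 + 1 by have := sqr_ge0 `|s|; lra.
have ct : c = t * (`|s| ^+ 2 + 1) by rewrite /t mulfVK // gt_eqF.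
have := qmin t; rewrite -(@ler_pXn2r _ 2) ?nnegrE //.
rewrite sqr_normB ipZr normrZ exprMn -/c ct real_normK ?num_real //.
have s2_ge0 := sqr_ge0 `|s|; move=> le_t.
have t0 : t = 0 by apply/eqP; rewrite -sqrf_eq0 eq_le sqr_ge0 andbT; nra.
by rewrite t0 mul0r.
Qed.

End InnerProduct.

Lemma closure_preimage_closed (S T : topologicalType) (f : S -> T)
    (A : set S) (C : set T) :
  continuous f -> closed C -> A `<=` f @^-1` C -> closure A `<=` f @^-1` C.
Proof.
move=> cf cC AC; rewrite [X in _ `<=` X](closure_id _).1; first exact: closureS.
by move/continuous_closedP : cf; apply.
Qed.

Lemma closure_preimage (S T : topologicalType) (f : S -> T)
    (A : set S) (C : set T) :
  continuous f -> A `<=` f @^-1` C -> closure A `<=` f @^-1` closure C.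
Proof.
move=> cf AC; apply: closure_preimage_closed => //; first exact: closed_closure.
by move=> a /AC; exact: (@subset_closure _ C).
Qed.

Lemma closureB (R : numFieldType) (V : normedModType R) (S : set V) :
    (forall x y, S x -> S y -> S (x - y)) ->
  forall x y, closure S x -> closure S y -> closure S (x - y).
Proof.
move=> SB x y Sx Sy.
have closure_xB : forall s, S s -> closure S (x - s).
  move=> s Ss; apply: (@closure_preimage _ _ (fun u => u - s) S) Sx.
    by move=> u; apply: cvgB; [exact: cvg_id | exact: cvg_cst].
  by move=> u Su; apply: SB.
apply: (@closure_preimage_closed _ _ (fun u => x - u) S (closure S)) Sy.
- by move=> u; apply: cvgB; [exact: cvg_cst | exact: cvg_id].
- exact: closed_closure.
- exact: closure_xB.
Qed.

Section BestApproximation.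
Variables (R : realType) (V : completeNormedModType R) (ip : V -> V -> R).
Hypothesis ipP : @inner_product R V ip.
Variable S : set V.
Hypothesis S0 : S 0.
Hypothesis SZD : forall (a : R) x y, S x -> S y -> S (a *: x + y).

Lemma continuous_sqr_dist (z : V) : continuous (fun c : V => `|z - c| ^+ 2).
Proof.
have dist_cont : continuous (fun c : V => `|z - c|).
  by move=> c; apply: cvg_norm; apply: cvgB; [exact: cvg_cst | exact: cvg_id].
by move=> c; exact: cvgM (dist_cont c) (dist_cont c).
Qed.

(* Parallelogram law applied to [z - u] and [z - v], whose half-sum is the
   distance from [z] to the midpoint of [u] and [v], which lies in [S]. *)
Lemma near_minimizers_close {z : V} {d2 a b : R} {u v : V} :
  (forall s, S s -> d2 <= `|z - s| ^+ 2) -> S u -> S v ->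
  `|z - u| ^+ 2 <= d2 + a -> `|z - v| ^+ 2 <= d2 + b ->
  `|u - v| ^+ 2 <= 2 * (a + b).
Proof.
move=> d2_lb Su Sv zu zv.
have Smid : S (2^-1 *: (u + v)).
  by rewrite scalerDr; apply: SZD => //; rewrite -[_ *: v]addr0; apply: SZD.
have mid := d2_lb _ Smid.
have -> : u - v = (z - v) - (z - u) by rewrite opprB [RHS]addrC addrA subrK.
have zuv : (z - v) + (z - u) = 2 *: (z - 2^-1 *: (u + v)).
  rewrite scalerBr scalerA mulfV ?pnatr_eq0 // scale1r scaler_nat mulr2n.
  by rewrite addrACA opprD [- u + _]addrC.
have := parallelogram ipP (z - v) (z - u).
rewrite zuv normrZ ger0_norm // exprMn; lra.
Qed.

Lemma best_approximation z :
  exists2 b, closure S b & forall c, closure S c -> `|z - b| <= `|z - c|.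
Proof.
pose E := [set `|z - s| ^+ 2 | s in S].
have hasE : has_inf E.
  by split; [exists (`|z - 0| ^+ 2), 0 | exists 0 => _ [s _ <-]; apply: sqr_ge0].
set d2 := inf E.
have d2_lb : forall s, S s -> d2 <= `|z - s| ^+ 2.
  by move=> s Ss; apply: ge_inf; [case: hasE | exists s].
pose e (n : nat) : R := n.+1%:R^-1.
have e_gt0 n : 0 < e n by rewrite invr_gt0 ltr0n.
have e_nonincr n m : (n <= m)%N -> e m <= e n.
  by move=> le_nm; rewrite lef_pV2 ?posrE ?ltr0n // ler_nat ltnS.
have near_inf n : exists s, S s /\ `|z - s| ^+ 2 <= d2 + e n.
  have [_ [s Ss <-] lt_s] := inf_adherent (e_gt0 n) hasE.
  by exists s; split; last exact: ltW.
have [f f_spec] := choice near_inf.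
have Sf n := (f_spec n).1; have f_min n := (f_spec n).2.
have f_cauchy : cauchy_ex (f @ \oo).
  move=> eps eps_gt0; have eps2_gt0 : 0 < eps ^+ 2 / 4 by rewrite divr_gt0 ?exprn_gt0.
  have [N _ /(_ N (leqnn _)) eN] := near_infty_natSinv_lt (PosNum eps2_gt0).
  exists (f N), N => // n /= le_Nn.
  rewrite -ball_normE /ball_ /= -(@ltr_pXn2r _ 2) ?nnegrE //; last exact: ltW.
  have := near_minimizers_close d2_lb (Sf N) (Sf n) (f_min N) (f_min n).
  by have := e_nonincr _ _ le_Nn; rewrite /= -/(e N) in eN; lra.
have /cauchy_cvg f_cvg : cauchy (f @ \oo) by apply: cauchy_exP.
exists (lim (f @ \oo)).
  apply: (closed_cvg _ (@closed_closure _ S) _ _ f_cvg).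
  by apply: nearW => n; apply: subset_closure.
have b_min : `|z - lim (f @ \oo)| ^+ 2 <= d2.
  apply/ler_addgt0Pr => eps eps_gt0.
  apply: (cvgr_to_le (continuous_cvg _ (continuous_sqr_dist z _) f_cvg)).
  apply: filterS (near_infty_natSinv_lt (PosNum eps_gt0)) => n /= en.
  by apply: le_trans (f_min n) _; rewrite lerD2l ltW.
move=> c Sc; rewrite -(@ler_pXn2r _ 2) ?nnegrE //; apply: le_trans b_min _.
exact: (closure_preimage_closed (continuous_sqr_dist z) (@closed_ge _ d2) d2_lb Sc).
Qed.

Lemma orthogonal_decomposition z :
  exists2 b, closure S b & forall s, S s -> ip (z - b) s = 0.
Proof.
have [b Sb b_min] := best_approximation z.
exists b => // s Ss; apply: (ip_eq0_of_minimal ipP) => t.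
rewrite -addrA -opprD; apply: b_min.
apply: (@closure_preimage _ _ (fun u => u + t *: s) S) Sb.
  by move=> u; apply: cvgD; [exact: cvg_id | exact: cvg_cst].
by move=> u Su /=; rewrite addrC; apply: SZD.
Qed.

End BestApproximation.

Lemma orthogonal_norm_le (R : realType) (V : normedModType R) (ip : V -> V -> R)
    (S : set V) {q c : V} :
  @inner_product R V ip -> (forall s, S s -> ip q s = 0) ->
  closure S c -> `|q| <= `|q - c|.
Proof.
move=> ipP q_orth.
apply: (@closure_preimage_closed _ _ (fun c => `|q - c|) S [set r | `|q| <= r]).
- by move=> u; apply: cvg_norm; apply: cvgB; [exact: cvg_cst | exact: cvg_id].
- exact: closed_ge.
- move=> s Ss /=; rewrite -(@ler_pXn2r _ 2) ?nnegrE // (sqr_normB ipP) q_orth //.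
  by have := sqr_ge0 `|s|; lra.
Qed.

Section HilbertComplex.
Variables (R : realType) (C : hilbert_complex R).

Local Notation Z k := (hc_cocycles R C k).
Local Notation B k := (hc_coboundaries R C k).

Let subr_scaleN1 (V : lmodType R) (x y : V) : x - y = (-1) *: y + x.
Proof. by rewrite scaleN1r addrC. Qed.

Lemma hc_d0 k : hc_d C k 0 = 0.
Proof.
have := hc_dlin _ C k (-1) 0 0 (hc_dom0 _ C k) (hc_dom0 _ C k).
by rewrite scaler0 addr0 scaleN1r addNr.
Qed.

Lemma hc_domB k x y : hc_dom C k x -> hc_dom C k y -> hc_dom C k (x - y).
Proof. by move=> Vx Vy; rewrite subr_scaleN1; apply: hc_domL. Qed.

Lemma hc_dB k x y : hc_dom C k x -> hc_dom C k y ->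
  hc_d C k (x - y) = hc_d C k x - hc_d C k y.
Proof. by move=> Vx Vy; rewrite !subr_scaleN1 hc_dlin. Qed.

Lemma hc_cocycles0 k : Z k 0.
Proof. by split; [exact: hc_dom0 | exact: hc_d0]. Qed.

Lemma hc_cocyclesB k x y : Z k x -> Z k y -> Z k (x - y).
Proof.
move=> [Vx dx] [Vy dy]; split; first exact: hc_domB.
by rewrite hc_dB // dx dy subrr.
Qed.

Lemma hc_coboundaries0 k : B k 0.
Proof. by case: k => [|j] //; exists 0; [exact: hc_dom0 | exact: hc_d0]. Qed.

Lemma hc_coboundariesZD k (a : R) x y : B k x -> B k y -> B k (a *: x + y).
Proof.
case: k x y => [|j] x y /=; first by move=> -> ->; rewrite scaler0 addr0.
move=> [u Vu <-] [v Vv <-]; exists (a *: u + v); first exact: hc_domL.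
exact: hc_dlin.
Qed.

Lemma hc_coboundariesB k x y : B k x -> B k y -> B k (x - y).
Proof. by move=> Bx By; rewrite subr_scaleN1; apply: hc_coboundariesZD. Qed.

Lemma hc_coboundaries_cocycle k x : B k x -> Z k x.
Proof.
case: k x => [|j] x /=; first by move=> ->; apply: hc_cocycles0.
by move=> [u Vu <-]; split; [exact: hc_dmap | exact: hc_dd].
Qed.

Lemma closed_hc_cocycles k : closed (Z k).
Proof.
have -> : Z k = (fun x => (x, 0 : hc_space C k.+1)) @^-1`
    [set p | hc_dom C k p.1 /\ hc_d C k p.1 = p.2] by [].
apply: (proj1 (continuous_closedP _)) (hc_closed _ C k).
by move=> x; apply: cvg_pair; [exact: cvg_id | exact: cvg_cst].
Qed.

Lemma closure_hc_coboundaries_cocycle k x : closure (B k) x -> Z k x.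
Proof.
apply: (@closure_preimage_closed _ _ id (B k) (Z k)) x.
- by move=> u; exact: cvg_id.
- exact: closed_hc_cocycles.
- exact: hc_coboundaries_cocycle.
Qed.

Lemma closure_hc_coboundaries0 k : closure (B k) 0.
Proof. exact/subset_closure/hc_coboundaries0. Qed.

Lemma closure_hc_coboundariesB k x y :
  closure (B k) x -> closure (B k) y -> closure (B k) (x - y).
Proof. by apply: closureB; apply: hc_coboundariesB. Qed.

End HilbertComplex.

Section Morphism.
Variables (R : realType) (C C' : hilbert_complex R).
Variable f : forall k, hc_space C k -> hc_space C' k.
Hypothesis fP : hc_morphism R C C' f.

Lemma hc_morph0 k : f k 0 = 0.
Proof.
have [f_lin _] := fP k; have := f_lin (-1) 0 0.
by rewrite scaler0 addr0 scaleN1r addNr.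
Qed.

Lemma hc_morphB k x y : f k (x - y) = f k x - f k y.
Proof.
have [f_lin _] := fP k.
by rewrite -[x - y]addrC -scaleN1r f_lin scaleN1r addrC.
Qed.

Lemma hc_morph_cocycle k z :
  hc_cocycles R C k z -> hc_cocycles R C' k (f k z).
Proof.
have [_ [_ [f_dom f_d]]] := fP k.
by move=> [Vz dz]; split; [exact: f_dom | rewrite f_d // dz hc_morph0].
Qed.

Lemma hc_morph_coboundary k b :
  hc_coboundaries R C k b -> hc_coboundaries R C' k (f k b).
Proof.
case: k b => [|k] b /=; first by move=> ->; rewrite hc_morph0.
have [_ [_ [f_dom f_d]]] := fP k.
by move=> [u Vu <-]; exists (f k u); [exact: f_dom | exact: f_d].
Qed.

Lemma hc_morph_closure_coboundary k b :
  closure (hc_coboundaries R C k) b -> closure (hc_coboundaries R C' k) (f k b).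
Proof.
have [_ [f_cont _]] := fP k.
by apply: closure_preimage => // c; apply: hc_morph_coboundary.
Qed.

Lemma hc_morph_induces_iso k :
  (forall z, hc_cocycles R C k z -> closure (hc_coboundaries R C' k) (f k z) ->
     closure (hc_coboundaries R C k) z) ->
  (forall z', hc_cocycles R C' k z' ->
     exists2 z, hc_cocycles R C k z & closure (hc_coboundaries R C' k) (z' - f k z)) ->
  induces_reduced_cohomology_iso R C C' k (f k).
Proof.
move=> f_inj f_surj; split; first exact: hc_morph_cocycle.
by split; first exact: hc_morph_closure_coboundary.
Qed.

End Morphism.

Section Approximation.
Variables (R : realType) (C Ch : hilbert_complex R).
Variables (ih : forall k, hc_space Ch k -> hc_space C k)
          (pih : forall k, hc_space C k -> hc_space Ch k).
Hypotheses (ihP : hc_morphism R Ch C ih) (pihP : hc_morphism R C Ch pih).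
Hypothesis pih_ih : forall k (x : hc_space Ch k), pih k (ih k x) = x.
Hypothesis harmonic_gap : forall k (q : hc_space C k),
  hc_harmonic R C k q -> q <> 0 -> `|q - ih k (pih k q)| < `|q|.

Lemma pih_reflects_closure_coboundaries k z :
  hc_cocycles R C k z -> closure (hc_coboundaries R Ch k) (pih k z) ->
  closure (hc_coboundaries R C k) z.
Proof.
move=> Zz pz_cl.
have [b Bb q_orth] := orthogonal_decomposition (hc_ipP _ C k) _
  (hc_coboundaries0 C k) (@hc_coboundariesZD _ C k) z.
have [/eqP|q_neq0] := eqVneq (z - b) 0; first by rewrite subr_eq0 => /eqP ->.
have q_harm : hc_harmonic R C k (z - b).
  by split=> //; apply: hc_cocyclesB => //; exact: closure_hc_coboundaries_cocycle.
have ipq_cl : closure (hc_coboundaries R C k) (ih k (pih k (z - b))).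
  apply: (hc_morph_closure_coboundary ihP); rewrite (hc_morphB pihP).
  by apply: closure_hc_coboundariesB => //; exact: (hc_morph_closure_coboundary pihP).
have := orthogonal_norm_le (hc_ipP _ C k) q_orth ipq_cl.
by rewrite leNgt harmonic_gap //; exact/eqP.
Qed.

Lemma closure_coboundaries_of_pih_eq0 k z :
  hc_cocycles R C k z -> pih k z = 0 -> closure (hc_coboundaries R C k) z.
Proof.
move=> Zz pz0; apply: pih_reflects_closure_coboundaries => //.
by rewrite pz0; apply: closure_hc_coboundaries0.
Qed.

Lemma ih_pih_cohomologous k z :
  hc_cocycles R C k z -> closure (hc_coboundaries R C k) (ih k (pih k z) - z).
Proof.
move=> Zz; apply: closure_coboundaries_of_pih_eq0.
  by apply: hc_cocyclesB => //; apply: (hc_morph_cocycle ihP); apply: (hc_morph_cocycle pihP).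
by rewrite (hc_morphB pihP) pih_ih subrr.
Qed.

End Approximation.

Theorem mainTheorem3 (R : realType) (C Ch : hilbert_complex R)
    (ih : forall k, hc_space Ch k -> hc_space C k)
    (pih : forall k, hc_space C k -> hc_space Ch k) :
  hc_morphism R Ch C ih -> hc_morphism R C Ch pih ->
  (forall k (x : hc_space Ch k), pih k (ih k x) = x) ->
  (forall k (q : hc_space C k), hc_harmonic R C k q -> q <> 0 ->
     `|q - ih k (pih k q)| < `|q|) ->
  forall k,
    induces_reduced_cohomology_iso R C Ch k (pih k) /\
    induces_reduced_cohomology_iso R Ch C k (ih k) /\
    (forall z, hc_cocycles R C k z ->
       closure (hc_coboundaries R C k) (ih k (pih k z) - z)).
Proof.
move=> ihP pihP pih_ih harmonic_gap k.
have ipz_cl := ih_pih_cohomologous ihP pihP pih_ih harmonic_gap (k := k).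
split; [|split] => //.
- apply: hc_morph_induces_iso => //.
    exact: (pih_reflects_closure_coboundaries ihP pihP harmonic_gap).
  move=> z' Zz'; exists (ih k z'); first exact: (hc_morph_cocycle ihP).
  by rewrite pih_ih subrr; apply: closure_hc_coboundaries0.
- apply: hc_morph_induces_iso => //.
    by move=> z' Zz' /(hc_morph_closure_coboundary pihP); rewrite pih_ih.
  move=> z Zz; exists (pih k z); first exact: (hc_morph_cocycle pihP).
  rewrite -opprB -sub0r; apply: closure_hc_coboundariesB; last exact: ipz_cl.
  exact: closure_hc_coboundaries0.
Qed.
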